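(* Let $r$, $n$, $t$ be positive integers with $2\le t\le r-1$ and $n=3r-t$. Then: (1) if $t\le \frac{r+5}{5}$, then $\rho_2(K(n,r))=3$; (2) if $\frac{r+5}{5}<t\le \frac{2r+9}{9}$, then $\rho_2(K(n,r))=4$.
   Context: For integers $n\ge 2r$, the Kneser graph $K(n,r)$ has as vertices the $r$-element subsets of $[n]=\{1,\dots,n\}$, two vertices being adjacent iff they are disjoint. A $2$-packing of a graph $G$ is a set of vertices pairwise at distance at least $3$ in $G$; $\rho_2(G)$ is the maximum cardinality of a $2$-packing. *)

From mathcomp Require Import all_boot.
Set Implicit Arguments. Unset Strict Implicit. Unset Printing Implicit Defensive.

(* A 2-packing: vertices pairwise at distance >= 3, i.e. distinct vertices
   are neither adjacent nor have a common neighbour (distance 0,1,2 excluded;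
   distance may be infinite). *)
Definition two_packing (V : finType) (adj : rel V) (S : {set V}) : bool :=
  [forall u in S, forall v in S,
     (u != v) ==> (~~ adj u v && ~~ [exists w, adj u w && adj w v])].

Definition rho2 (V : finType) (adj : rel V) : nat :=
  \max_(S : {set V} | two_packing adj S) #|S|.

Definition kneser_vertex (n r : nat) := {A : {set 'I_n} | #|A| == r}.

Definition kneser_adj (n r : nat) : rel (kneser_vertex n r) :=
  fun A B => [disjoint (val A) & (val B)].

Definition rho2_kneser (n r : nat) : nat := rho2 (@kneser_adj n r).

From mathcomp Require Import all_boot zify.
Set Implicit Arguments. Unset Strict Implicit. Unset Printing Implicit Defensive.

(* Two r-sets u, v of [n] have a common neighbour in K(n, r) iff the complement
   of u :|: v has room for r points; for n = 3r - t this means |u :&: v| >= t.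
   Hence a 2-packing is a family of r-sets whose pairwise intersections lie
   strictly between 0 and t.  For m members of such a family, the Bonferroni
   inequality gives m r <= n + C(m, 2) (t - 1), which fails for m = 4 when
   5t <= r + 5 and for m = 5 when 9t <= 2r + 9.  Conversely, m sets made of a
   private block of r - (m - 1)(t - 1) points each, plus one block of t - 1
   points shared by each pair, fit into [n] for m = 3, resp. m = 4 when
   r + 5 < 5t. *)

Lemma two_packingP (V : finType) (adj : rel V) (S : {set V}) :
  reflect {in S &, forall u v, u != v ->
             ~~ adj u v && ~~ [exists w, adj u w && adj w v]}
          (two_packing adj S).
Proof.
apply: (iffP forall_inP) => [pS u v uS vS | pS u uS].
  by move/forall_inP: (pS u uS) => /(_ v vS) /implyP.
by apply/forall_inP => v vS; apply/implyP; apply: pS.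
Qed.

Lemma leq_rho2 (V : finType) (adj : rel V) (S : {set V}) :
  two_packing adj S -> #|S| <= rho2 adj.
Proof. by move=> pS; apply: (leq_bigmax_cond _ pS). Qed.

Lemma card_setI_bigcup_leq (T : finType) (A : {set T}) (s : seq {set T}) c :
  all (fun B => #|A :&: B| <= c) s -> #|A :&: \bigcup_(B <- s) B| <= size s * c.
Proof.
elim: s => [|B s IHs] /=; first by rewrite big_nil setI0 cards0.
case/andP=> AB /IHs; rewrite big_cons setIUr.
have := cardsUI (A :&: B) (A :&: \bigcup_(B <- s) B); lia.
Qed.

Lemma sum_card_leq_bigcup (T : finType) (s : seq {set T}) c :
  pairwise (fun A B => #|A :&: B| <= c) s ->
  \sum_(A <- s) #|A| <= #|\bigcup_(A <- s) A| + 'C(size s, 2) * c.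
Proof.
elim: s => [|A s IHs] /=; first by rewrite big_nil.
case/andP=> /card_setI_bigcup_leq As /IHs; rewrite !big_cons binS bin1.
have := cardsUI A (\bigcup_(B <- s) B); lia.
Qed.

Section SumSet.

Variables T1 T2 : finType.

Definition sum_set (X : {set T1}) (Y : {set T2}) : {set T1 + T2} :=
  [set x | match x with inl a => a \in X | inr b => b \in Y end].

Lemma card_sum_set X Y : #|sum_set X Y| = #|X| + #|Y|.
Proof.
by rewrite -!sum1_card big_sumType; congr (_ + _); apply: eq_bigl => a; rewrite inE.
Qed.

Lemma setI_sum_set X Y X' Y' :
  sum_set X Y :&: sum_set X' Y' = sum_set (X :&: X') (Y :&: Y').
Proof. by apply/setP => -[a | b]; rewrite !inE. Qed.

End SumSet.

Lemma setIX (T1 T2 : finType) (A1 B1 : {set T1}) (A2 B2 : {set T2}) :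
  setX A1 A2 :&: setX B1 B2 = setX (A1 :&: B1) (A2 :&: B2).
Proof. by apply/setP => -[x1 x2]; rewrite !inE andbACA. Qed.

Lemma ord_embedding (T : finType) (D : {set T}) n :
  0 < n -> #|D| <= n -> exists f : T -> 'I_n, {in D &, injective f}.
Proof.
case: n => // n _ Dn; exists (fun x => inord (index x (enum D))) => x y xD yD.
have index_lt z : z \in D -> index z (enum D) < n.+1.
  by move=> zD; apply: leq_trans Dn; rewrite cardE index_mem mem_enum.
move/(congr1 (@nat_of_ord _)); rewrite !inordK ?index_lt //.
by apply: (index_inj x); rewrite mem_enum.
Qed.

Section KneserDistance.

Variables n r : nat.
Implicit Types u v : kneser_vertex n r.

Lemma card_kneser_vertex u : #|val u| = r.
Proof. exact: eqP (valP u). Qed.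

Lemma kneser_common_nbrE u v :
  [exists w, kneser_adj u w && kneser_adj w v] = (r + #|val u :|: val v| <= n).
Proof.
have cardC := cardsC (val u :|: val v); rewrite card_ord in cardC.
rewrite /kneser_adj; apply/existsP/idP => [[w /andP[uw wv]] | ].
  have : val w \subset ~: (val u :|: val v).
    by rewrite setCU subsetI -!disjoints_subset disjoint_sym uw wv.
  by move/subset_leq_card; rewrite card_kneser_vertex; lia.
move=> room.
have /card_geqP[s [s_uniq s_size s_sub]] : r <= #|~: (val u :|: val v)| by lia.
have W_r : #|[set x in s]| == r by rewrite cardsE (card_uniqP s_uniq) s_size.
have : [set x in s] \subset ~: (val u :|: val v).
  by apply/subsetP => x; rewrite inE => /s_sub.
rewrite setCU subsetI -!disjoints_subset => /andP[uW vW].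
by exists (exist _ [set x in s] W_r); rewrite /kneser_adj /= disjoint_sym uW vW.
Qed.

Lemma kneser_farE t u v : n + t = 3 * r ->
  ~~ kneser_adj u v && ~~ [exists w, kneser_adj u w && kneser_adj w v]
  = (0 < #|val u :&: val v| < t).
Proof.
move=> nt; rewrite kneser_common_nbrE /kneser_adj -setI_eq0 -cards_eq0 -lt0n.
have := cardsUI (val u) (val v); rewrite !card_kneser_vertex => cardUI.
by congr (_ && _); apply/idP/idP; lia.
Qed.

End KneserDistance.

Section KneserPackingBound.

Variables n r t : nat.
Hypothesis nt : n + t = 3 * r.

Lemma kneser_packing_bound (S : {set kneser_vertex n r}) s :
  two_packing (@kneser_adj n r) S -> uniq s -> {subset s <= S} ->
  size s * r <= n + 'C(size s, 2) * (t - 1).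
Proof.
move=> /two_packingP pS s_uniq sS.
have meet_lt : pairwise (fun A B => #|A :&: B| <= t - 1) (map val s).
  rewrite pairwise_map; move: s_uniq; rewrite uniq_pairwise.
  apply: (sub_in_pairwise (P := mem S)); last by apply/allP.
  move=> u v uS vS /= uv; have := pS u v uS vS uv; rewrite (kneser_farE _ _ nt).
  by case/andP => _ lt_t; rewrite -ltnS subn1 (ltn_predK lt_t).
have := sum_card_leq_bigcup meet_lt; rewrite size_map big_map.
rewrite (eq_bigr (fun=> r)) => [|v _]; last exact: card_kneser_vertex.
rewrite big_const_seq count_predT iter_addn_0 mulnC.
by move/leq_trans; apply; rewrite leq_add2r (leq_trans (max_card _)) ?card_ord.
Qed.

Lemma rho2_kneser_leq m :
  n + 'C(m.+1, 2) * (t - 1) < m.+1 * r -> rho2_kneser n r <= m.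
Proof.
move=> too_big; apply/bigmax_leqP => S pS; rewrite leqNgt; apply/negP.
case/card_geqP => s [s_uniq s_size sS].
by have := kneser_packing_bound pS s_uniq sS; rewrite s_size leqNgt too_big.
Qed.

End KneserPackingBound.

Section PairsThrough.

Variable m : nat.

Definition pairs_through (k : 'I_m) : {set {set 'I_m}} :=
  [set e : {set 'I_m} | (k \in e) && (#|e| == 2)].

Lemma card_pairs_through k : #|pairs_through k| = m.-1.
Proof.
have -> : pairs_through k = [set [set k; j] | j in [set~ k]].
  apply/setP => e; rewrite inE; apply/andP/imsetP => [[ke /cards2P[a [b [ab e_ab]]]] | ].
    rewrite e_ab in ke *; case/set2P: ke => ->.
      by exists b; rewrite // !inE eq_sym.
    by exists a; rewrite ?inE // setUC.
  by case=> j; rewrite !inE => jk ->; rewrite set21 cards2 (eq_sym k) jk.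
rewrite card_in_imset; first by rewrite cardsC1 card_ord.
move=> a b; rewrite !inE => ak bk eab.
by have := set22 k a; rewrite eab => /set2P[/eqP | ->]; rewrite ?(negbTE ak).
Qed.

Lemma pairs_throughI i j : i != j ->
  pairs_through i :&: pairs_through j = [set [set i; j]].
Proof.
move=> ij; apply/setP => e; rewrite !inE andbACA andbb.
apply/idP/eqP => [/andP[/andP[ie je] /eqP e2] | ->]; last by rewrite set21 set22 cards2 ij.
apply/esym/eqP; rewrite eqEcard e2 cards2 ij leqnn andbT.
by apply/subsetP => x /set2P[] ->.
Qed.

End PairsThrough.

Section Blocks.

Variables m p s : nat.

(* The points of the construction: a private block 'I_p for each k : 'I_m,
   and a shared block 'I_s for each pair e (other subsets e of 'I_m are unused). *)
Definition block (k : 'I_m) : {set 'I_m * 'I_p + {set 'I_m} * 'I_s} :=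
  sum_set (setX [set k] setT) (setX (pairs_through k) setT).

Lemma card_block k : #|block k| = p + m.-1 * s.
Proof.
by rewrite card_sum_set !cardsX cards1 card_pairs_through !cardsT !card_ord mul1n.
Qed.

Lemma card_blockI i j : i != j -> #|block i :&: block j| = s.
Proof.
move=> ij; rewrite setI_sum_set !setIX pairs_throughI // card_sum_set.
have -> : [set i] :&: [set j] = set0.
  by apply/eqP; rewrite setI_eq0 disjoints1 inE.
by rewrite !setIid !cardsX cards0 cards1 !cardsT !card_ord mul0n mul1n.
Qed.

Lemma card_bigcup_block : #|\bigcup_k block k| <= m * p + 'C(m, 2) * s.
Proof.
pose ground := sum_set [set: 'I_m * 'I_p]
                 (setX [set e : {set 'I_m} | #|e| == 2] [set: 'I_s]).
have -> : m * p + 'C(m, 2) * s = #|ground|.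
  by rewrite card_sum_set cardsX !cardsT card_prod card_draws !card_ord.
apply/subset_leq_card/bigcupsP => k _; apply/subsetP => -[x | [e l]].
  by rewrite !inE.
by rewrite !inE !andbT => /andP[].
Qed.

End Blocks.

Lemma kneser_family (I T : finType) (A : I -> {set T}) n r :
  0 < n -> #|\bigcup_i A i| <= n -> (forall i, #|A i| = r) ->
  exists F : I -> kneser_vertex n r,
    forall i j, #|val (F i) :&: val (F j)| = #|A i :&: A j|.
Proof.
move=> n_gt0 /(ord_embedding n_gt0)[f f_inj] A_r.
have card_f (X : {set T}) : X \subset \bigcup_i A i -> #|f @: X| = #|X|.
  by move=> /subsetP XD; apply: card_in_imset; apply: sub_in2 f_inj.
have A_sub i : A i \subset \bigcup_i A i by apply: bigcup_sup.
have fA_r i : #|f @: A i| == r by rewrite card_f ?A_r.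
exists (fun i => exist _ (f @: A i) (fA_r i)) => i j /=.
rewrite -imsetI ?card_f //; first by apply: subIset; rewrite A_sub.
by move=> x y /(subsetP (A_sub i)) xD /(subsetP (A_sub j)) yD; apply: f_inj.
Qed.

Lemma leq_rho2_kneser n r t m s :
  0 < n -> n + t = 3 * r -> 0 < s < t -> s < r -> m.-1 * s <= r ->
  m * (r - m.-1 * s) + 'C(m, 2) * s <= n -> m <= rho2_kneser n r.
Proof.
move=> n_gt0 nt /andP[s_gt0 s_lt_t] s_lt_r shared_r ground_n.
have [F F_meet] : exists F : 'I_m -> kneser_vertex n r,
    forall i j, #|val (F i) :&: val (F j)| = #|block (r - m.-1 * s) s i :&: block _ s j|.
  apply: kneser_family => // [|i]; first exact: leq_trans (card_bigcup_block _ _ _) ground_n.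
  by rewrite card_block subnK.
have F_inj : injective F.
  move=> i j Fij; apply/eqP; apply: contraTT s_lt_r => ij.
  by have := F_meet i j; rewrite Fij setIid card_kneser_vertex card_blockI // => ->; rewrite ltnn.
have : two_packing (@kneser_adj n r) (F @: setT).
  apply/two_packingP => _ _ /imsetP[i _ ->] /imsetP[j _ ->] Fij.
  rewrite (kneser_farE _ _ nt) F_meet card_blockI ?s_gt0 ?s_lt_t //.
  by apply: contraNneq Fij => ->.
by move/leq_rho2; rewrite card_imset // cardsT card_ord.
Qed.

Theorem theorem4p8 (r n t : nat) :
  0 < r -> 0 < n -> 0 < t ->
  2 <= t -> t <= r - 1 -> n = 3 * r - t ->
  (5 * t <= r + 5 -> rho2_kneser n r = 3) /\
  (r + 5 < 5 * t -> 9 * t <= 2 * r + 9 -> rho2_kneser n r = 4).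
Proof.
move=> _ n_gt0 _ t_ge2 t_lt_r n_def.
have nt : n + t = 3 * r by lia.
have s_bounds : 0 < t - 1 < t by apply/andP; split; lia.
have s_lt_r : t - 1 < r by lia.
have [C32 C42 C52] : [/\ 'C(3, 2) = 3, 'C(4, 2) = 6 & 'C(5, 2) = 10] by [].
split=> [t_small | t_large t_mid]; apply/anti_leq/andP; split.
- by apply: (rho2_kneser_leq (m := 3) nt); rewrite C42; lia.
- by apply: (leq_rho2_kneser (m := 3) n_gt0 nt s_bounds s_lt_r); rewrite ?C32; lia.
- by apply: (rho2_kneser_leq (m := 4) nt); rewrite C52; lia.
- by apply: (leq_rho2_kneser (m := 4) n_gt0 nt s_bounds s_lt_r); rewrite ?C42; lia.
Qed.
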